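(* Let $k=\delta n$ with $\delta = \omega(\log^{-1/3} n)$, let $G = (X\dot\cup Y,E)$ be a $k$-regular bipartite graph on $2n$ vertices, let $(S,T)$ be a cut of $G$, and let $V' = V\setminus \Gamma(S,T)$. Let $G_1\sim G(p_1)$ with $p_1 = \frac{\log n - \log\log\log\log n}{k}$. Then, w.v.h.p., every $x\in V'$ satisfies $\deg^{\mathrm{Cr}}_{G_1}(x)\le 30$.
   Context: $V = X\cup Y$. A cut is a pair $(S,T)$ with $S\subseteq X$, $T\subseteq Y$; cross edges w.r.t. $(S,T)$ are edges joining $S$ to $Y\setminus T$ or $X\setminus S$ to $T$. $\deg^{\mathrm{Cr}}_{H}(x)$ denotes the number of cross edges of the subgraph $H$ incident to $x$. $\Gamma(S,T) = \{x\in V : \deg^{\mathrm{Cr}}_{G}(x) \ge n^{-1/20}k\}$. $G(p)$ retains each edge of $G$ independently with probability $p$. A sequence of events $A_n$ holds with very high probability (w.v.h.p.) if $\log(\mathbb P[A_n^c]) = -\Omega(\log n)$. *)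

From HB Require Import structures.
From mathcomp Require Import all_boot all_order all_algebra.
From mathcomp Require Import reals sequences exp.
Set Implicit Arguments. Unset Strict Implicit. Unset Printing Implicit Defensive.
Import Order.TTheory GRing.Theory Num.Theory.
Local Open Scope ring_scope.

(* Bipartite graph on X = 'I_n (inl) and Y = 'I_n (inr); an edge set is a
   set of pairs (x, y) with x in X, y in Y. *)
Definition vert (n : nat) := ('I_n + 'I_n)%type.
Definition edges (n : nat) := {set 'I_n * 'I_n}.

Definition regular_bip (n k : nat) (E : edges n) : Prop :=
  (forall x : 'I_n, #|[set e in E | e.1 == x]| = k) /\
  (forall y : 'I_n, #|[set e in E | e.2 == y]| = k).

Definition cross (n : nat) (S T : {set 'I_n}) (e : 'I_n * 'I_n) : bool :=
  ((e.1 \in S) && (e.2 \notin T)) || ((e.1 \notin S) && (e.2 \in T)).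

Definition incident (n : nat) (v : vert n) (e : 'I_n * 'I_n) : bool :=
  match v with inl x => e.1 == x | inr y => e.2 == y end.

Definition crdeg (n : nat) (S T : {set 'I_n}) (H : edges n) (v : vert n) : nat :=
  #|[set e in H | cross S T e && incident v e]|.

Definition Gamma (R : realType) (n k : nat) (E : edges n) (S T : {set 'I_n})
  (v : vert n) : bool :=
  (n%:R `^ (- (20%:R)^-1) * k%:R <= (crdeg S T E v)%:R :> R).

(* Probability under G(p) (each edge of E kept independently with prob. p)
   of the event A (a predicate on subgraphs H of E). *)
Definition Gp_prob (R : realType) (n : nat) (E : edges n) (p : R)
  (A : pred (edges n)) : R :=
  \sum_(H : edges n | (H \subset E) && A H) p ^+ #|H| * (1 - p) ^+ #|E :\: H|.

Definition p1 (R : realType) (n k : nat) : R :=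
  (ln (n%:R : R) - ln (ln (ln (ln (n%:R : R))))) / k%:R.

Definition bad (R : realType) (n k : nat) (E : edges n) (S T : {set 'I_n})
  (H : edges n) : bool :=
  [exists v : vert n, ~~ Gamma R k E S T v && (30 < crdeg S T H v)%N].

From HB Require Import structures.
From mathcomp Require Import all_boot all_order all_algebra.
From mathcomp Require Import reals sequences exp.
From mathcomp Require Import ring lra.
Set Implicit Arguments. Unset Strict Implicit. Unset Printing Implicit Defensive.
Import Order.TTheory GRing.Theory Num.Theory.
Local Open Scope ring_scope.

(* A vertex v outside Gamma(S,T) has d_v < n^(-1/20) k cross
   edges in G; if more than 30 of them survive in G(p), then one of the
   C(d_v, 31) <= d_v^31 sets of 31 of them survives, each with probability
   p^31.  The failure probability is therefore at most
   2n (n^(-1/20) k p)^31 <= 2n (n^(-1/20) log n)^31 = n^(-1/20) 2 (log n)^31 n^(-1/2),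
   which is below n^(-1/20) for large n.  The density hypothesis only serves to
   make k >= log n, i.e. p <= 1. *)

Section RandomSubgraph.
Variables (R : realType) (n : nat) (E : edges n) (p : R).

Definition cross_edges (S T : {set 'I_n}) (H : edges n) (v : vert n) : edges n :=
  [set e in H | cross S T e && incident v e].

Lemma cross_edges_sub S T (H : edges n) v : cross_edges S T H v \subset H.
Proof. by apply/subsetP => e; rewrite inE => /andP[]. Qed.

Lemma cross_edgesS S T (H H' : edges n) v :
  H \subset H' -> cross_edges S T H v \subset cross_edges S T H' v.
Proof.
move=> /subsetP HH'; apply/subsetP => e.
by rewrite !inE => /andP[/HH' -> ->].
Qed.

(* Expand [\prod_e (f e + g e)] by distributivity: [f e] and [g e] weigh keeping
   and dropping [e], and [g] vanishes on [F], so only subgraphs containing [F] remain. *)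
Lemma Gp_prob_supset (F : edges n) : F \subset E ->
  Gp_prob E p (fun H => F \subset H) = p ^+ #|F|.
Proof.
move=> /subsetP FE; rewrite /Gp_prob.
pose f e := if e \in E then p else 0.
pose g e := if e \in E then (if e \in F then 0 else 1 - p) else 1.
have prod_fg : \prod_e (f e + g e) = p ^+ #|F|.
  rewrite -prodr_const [RHS]big_mkcond /=; apply: eq_bigr => e _.
  rewrite /f /g; case: ifP => eE; case: ifP => eF.
  - by rewrite addr0.
  - by rewrite addrC subrK.
  - by rewrite FE in eE.
  - by rewrite add0r.
rewrite big_mkcond /= -prod_fg bigA_distr; apply: eq_bigr => H _.
have [HE|/subsetPn[e eH eE]] /= := boolP (H \subset E); last first.
  by rewrite (bigD1 e) //= eH /f (negbTE eE) mul0r.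
have [FH|/subsetPn[e eF eH]] := boolP (F \subset H); last first.
  by rewrite (bigD1 e) //= (negbTE eH) /g FE // eF mul0r.
rewrite (bigID (mem H)) /= -!prodr_const; congr (_ * _).
  by apply: eq_bigr => e eH; rewrite eH /f (subsetP HE).
rewrite [LHS]big_mkcond [RHS]big_mkcond /=; apply: eq_bigr => e _.
rewrite /g !inE; case: (boolP (e \in H)) => //= eH; case: ifP => // eE.
by rewrite (contraNF (subsetP FH e)).
Qed.

Hypothesis p01 : 0 <= p <= 1.

Lemma Gp_prob_union_bound (I : finType) (P : pred I) (A : pred (edges n))
    (B : I -> pred (edges n)) :
  (forall H : edges n, H \subset E -> A H -> exists2 i, P i & B i H) ->
  Gp_prob E p A <= \sum_(i | P i) Gp_prob E p (B i).
Proof.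
move=> cover; have /andP[p0 p1] := p01.
have w_ge0 (H : edges n) : 0 <= p ^+ #|H| * (1 - p) ^+ #|E :\: H|.
  by rewrite mulr_ge0 ?exprn_ge0 ?subr_ge0.
rewrite /Gp_prob.
under [X in _ <= X]eq_bigr => i _ do rewrite big_mkcondr /=.
rewrite exchange_big /= big_mkcondr /=; apply: ler_sum => H HE.
case: ifPn => [/(cover H HE)[i Pi BiH] | _]; last first.
  by apply: sumr_ge0 => i _; case: ifP.
by rewrite (bigD1 i) //= BiH lerDl sumr_ge0 // => j _; case: ifP.
Qed.

Lemma Gp_prob_crdeg_gt S T v (m : nat) :
  Gp_prob E p (fun H => (m < crdeg S T H v)%N) <=
    'C(crdeg S T E v, m.+1)%:R * p ^+ m.+1.
Proof.
pose draw (F : edges n) := (F \subset cross_edges S T E v) && (#|F| == m.+1).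
apply: le_trans (Gp_prob_union_bound (P := draw) (B := fun F H => F \subset H) _) _.
  move=> H HE Hm.
  have : (0 < #|[set F : edges n | F \subset cross_edges S T H v & #|F| == m.+1]|)%N.
    by rewrite cards_draws bin_gt0.
  case/card_gt0P => F; rewrite inE => /andP[FC FS]; exists F.
    by rewrite /draw FS andbT (subset_trans FC) ?cross_edgesS.
  exact: subset_trans FC (cross_edges_sub _ _ _ _).
rewrite (eq_bigr (fun _ => p ^+ m.+1)); last first.
  move=> F /andP[FC /eqP <-].
  exact/Gp_prob_supset/(subset_trans FC)/cross_edges_sub.
rewrite sumr_const (_ : #|draw| = 'C(crdeg S T E v, m.+1)) ?mulr_natl //.
by rewrite -cards_draws; apply: eq_card => F; rewrite inE.
Qed.

Lemma Gp_prob_bad_le k S T (b : R) : 0 <= b ->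
    (forall v, ~~ Gamma R k E S T v -> 'C(crdeg S T E v, 31)%:R * p ^+ 31 <= b) ->
  Gp_prob E p (bad R k E S T) <= 2 * n%:R * b.
Proof.
move=> b0 term_le.
apply: le_trans (Gp_prob_union_bound (P := fun v => ~~ Gamma R k E S T v)
  (B := fun v H => 30 < crdeg S T H v)%N _) _.
  by move=> H _ /existsP[v /andP[vG Hv]]; exists v.
apply: le_trans (_ : \sum_(v : vert n) b <= _).
  rewrite big_mkcond; apply: ler_sum => v _; case: ifPn => // vG.
  exact: le_trans (Gp_prob_crdeg_gt _ _ _ _) (term_le v vG).
by rewrite sumr_const card_sum !card_ord -[b *+ _]mulr_natl natrD -mulr2n mulr_natl.
Qed.
End RandomSubgraph.

Lemma bin_le_expn d m : ('C(d, m) <= d ^ m)%N.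
Proof.
apply: leq_trans (leq_pmulr _ (fact_gt0 m)) _.
rewrite bin_ffact ffact_prod -[X in (_ <= _ ^ X)%N]card_ord -prod_nat_const.
by apply: leq_prod => i _; apply: leq_subr.
Qed.

Section Estimates.
Variable R : realType.

Lemma gt0_of_ln_gt0 (x : R) : 0 < ln x -> 0 < x.
Proof. by apply: contraTT; rewrite -!leNgt => /le_trans/(_ ler01)/ln_le0. Qed.

Lemma binomial_term_le (d m : nat) (p y : R) : 0 <= p -> d%:R <= y ->
  'C(d, m)%:R * p ^+ m <= (y * p) ^+ m.
Proof.
move=> p0 dy; rewrite exprMn ler_wpM2r ?exprn_ge0 //.
apply: le_trans (_ : d%:R ^+ m <= _); first by rewrite -natrX ler_nat bin_le_expn.
by rewrite lerXn2r ?nnegrE // (le_trans _ dy).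
Qed.

Lemma eventually_ge_ln (b : R) :
  exists N : nat, forall n : nat, (N <= n)%N -> b <= ln (n%:R : R).
Proof.
exists (Num.truncn (expR b)).+1 => n Nn.
have bn : expR b < n%:R.
  by apply: lt_le_trans (truncnS_gt _) _; rewrite ler_nat.
rewrite -{1}(expRK b) ler_ln ?posrE ?expR_gt0 ?(ltW bn) //.
exact: lt_trans (expR_gt0 b) bn.
Qed.

(* [ln L <= L] gives [L `^ (-1/3) >= expR (- L / 3)], so [k >= expR (2 L / 3)]. *)
Lemma ln_le_of_density (x kappa : R) : 3 <= ln x ->
  1 <= kappa / x / ln x `^ (- 3%:R^-1) -> ln x <= kappa.
Proof.
set L := ln x => L3 dens.
have L0 : 0 < L by lra.
have x0 := gt0_of_ln_gt0 L0.
rewrite /powR gt_eqF // ler_pdivlMr ?expR_gt0 // mul1r ler_pdivlMr // in dens.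
have lnL : expR (- 3%:R^-1 * L) <= expR (- 3%:R^-1 * ln L).
  by rewrite ler_expR; have := ln_sublinear L0; lra.
have two_thirds : expR (2%:R / 3%:R * L) <= kappa.
  apply: le_trans dens; rewrite (_ : 2%:R / 3%:R * L = L + - 3%:R^-1 * L); last by field.
  by rewrite expRD lnK ?posrE // mulrC ler_wpM2r // ltW.
have y0 : 0 <= 2%:R / 3%:R * L by lra.
have := expR_ge1Dxn 1 y0; rewrite (_ : 2`!%:R = 2 :> R) // expr2 => quad.
have : 0 <= (L - 3) * L by rewrite mulr_ge0 //; lra.
nra.
Qed.

Lemma ln3_bounds (L : R) : expR (expR 1) <= L -> 0 <= ln (ln (ln L)) <= L.
Proof.
move=> eeL; have e0 := @expR_gt0 R 1; have ee0 := @expR_gt0 R (expR 1).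
have lnL : expR 1 <= ln L by rewrite -ler_expR lnK ?posrE //; lra.
have ln2L : 1 <= ln (ln L) by rewrite -ler_expR lnK ?posrE //; lra.
rewrite ln_ge0 //=.
have := @ln_sublinear R (ln (ln L)) ltac:(lra).
have := @ln_sublinear R (ln L) ltac:(lra).
have := @ln_sublinear R L ltac:(lra).
lra.
Qed.

Lemma p1_bounds (n k : nat) : expR (expR 1) <= ln (n%:R : R) ->
  ln (n%:R : R) <= k%:R ->
  [/\ 0 <= p1 R n k, p1 R n k <= 1 & p1 R n k * k%:R <= ln (n%:R : R)].
Proof.
move=> eeL Lk; have /andP[l3_ge0 l3_le] := ln3_bounds eeL.
have k0 : 0 < k%:R :> R by apply: lt_le_trans Lk; have := @expR_gt0 R (expR 1); lra.
rewrite /p1 ler_pdivrMr // mulrVK ?unitfE ?gt_eqF //.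
by split; [apply: divr_ge0 | |]; lra.
Qed.

Lemma expR_half_dominates_pow (m : nat) :
  exists2 c : R, 0 <= c & forall L, c <= L -> 2 * L ^+ m <= expR (L / 2).
Proof.
set f : R := m.+1`!%:R; have f0 : 0 < f by rewrite ltr0n fact_gt0.
have f2 : 0 < 2 ^+ m.+1 * f by rewrite mulr_gt0 ?exprn_gt0.
exists (2 * (2 ^+ m.+1 * f)) => [|L cL]; first by rewrite mulr_ge0 ?ltW.
have L0 : 0 <= L by apply: le_trans cL; rewrite mulr_ge0 ?ltW.
have L2 : 0 <= L / 2 by rewrite divr_ge0.
apply: le_trans (expR_ge1Dxn m L2); rewrite -/f.
rewrite (_ : (L / 2) ^+ m.+1 / f = L ^+ m * (L / (2 ^+ m.+1 * f))); last first.
  by rewrite expr_div_n exprSr invfM !mulrA.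
have : 2 <= L / (2 ^+ m.+1 * f) by rewrite ler_pdivlMr.
have := exprn_ge0 m L0; nra.
Qed.

Lemma nonGamma_term_le (n k m : nat) (E : edges n) S T v (p L : R) :
  0 <= p -> p * k%:R <= L -> ~~ Gamma R k E S T v ->
  'C(crdeg S T E v, m)%:R * p ^+ m <= (n%:R `^ (- 20%:R^-1) * L) ^+ m.
Proof.
rewrite /Gamma -ltNge => p0 pk /ltW/(binomial_term_le m p0)/le_trans; apply.
have L0 : 0 <= L by apply: le_trans pk; rewrite mulr_ge0.
rewrite lerXn2r ?nnegrE ?mulr_ge0 ?powR_ge0 //.
by rewrite -mulrA ler_wpM2l ?powR_ge0 // mulrC.
Qed.

(* The exponent is [L - 31 L / 20 = - L / 2 - L / 20]. *)
Lemma two_expR_mul_pow_le (L : R) : 2 * L ^+ 31 <= expR (L / 2) ->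
  2 * expR L * (expR (- 20%:R^-1 * L) * L) ^+ 31 <= expR (- (20%:R^-1 * L)).
Proof.
move=> small.
rewrite exprMn -expRM_natl.
set a := 31%:R * _.
have e : expR L * expR a = expR (- (20%:R^-1 * L)) / expR (L / 2).
  by rewrite -expRN -!expRD /a; congr expR; field.
rewrite (_ : _ * _ = expR L * expR a * (2 * L ^+ 31)); last by ring.
rewrite e mulrAC -mulrA ler_piMr ?expR_ge0 //.
by rewrite ler_pdivrMr ?expR_gt0 // mul1r.
Qed.
End Estimates.

Theorem lemma3p4 (R : realType) (k : nat -> nat)
  (G : forall n : nat, edges n) (S T : forall n : nat, {set 'I_n}) :
  (* delta_n = k_n / n = omega(log^{-1/3} n) *)
  (forall M : R, exists N : nat, forall n : nat, (N <= n)%N ->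
     M <= ((k n)%:R / n%:R) / (ln (n%:R : R)) `^ (- (3%:R)^-1)) ->
  (forall n : nat, regular_bip (k n) (G n)) ->
  (* w.v.h.p.: log P[failure] <= - c log n for large n *)
  exists c : R, 0 < c /\ exists N : nat, forall n : nat, (N <= n)%N ->
    Gp_prob (G n) (p1 R n (k n)) (bad R (k n) (G n) (S n) (T n))
      <= expR (- (c * ln (n%:R : R))).
Proof.
move=> dense _.
exists 20%:R^-1; split; first by rewrite invr_gt0 ltr0n.
have [c c0 pow_small] := @expR_half_dominates_pow R 31.
have [N1 ln_big] := eventually_ge_ln (c + expR (expR 1) + 3).
have [N2 dense1] := dense 1.
exists (maxn N1 N2) => n; rewrite geq_max => /andP[/ln_big L_big /dense1 dens].
set x : R := n%:R in L_big dens *; set L := ln x in L_big dens *.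
have ee0 := @expR_gt0 R (expR 1).
have cL : c <= L by lra.
have L3 : 3 <= L by lra.
have eeL : expR (expR 1) <= L by lra.
have [p0 p_le1 pk] := p1_bounds eeL (ln_le_of_density L3 dens).
have p01 : 0 <= p1 R n (k n) <= 1 by rewrite p0 p_le1.
have x0 : 0 < x by apply: gt0_of_ln_gt0; rewrite -/L; lra.
apply: le_trans (Gp_prob_bad_le p01 (b := (x `^ (- 20%:R^-1) * L) ^+ 31) _ _) _.
- by rewrite exprn_ge0 // mulr_ge0 ?powR_ge0 //; lra.
- by move=> v; apply: nonGamma_term_le.
rewrite /powR gt_eqF // -/x -/L -{1}(lnK x0) -/L.
exact/two_expR_mul_pow_le/pow_small.
Qed.
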